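(* Let $\sigma$ be a signature and $\mathcal F\in\mathbb F_\sigma$. (i) For any generalized causal team $T$ over $\sigma$: $T\models^g\Phi^{\mathcal F}$ iff $\mathcal G\sim\mathcal F$ for all $(s,\mathcal G)\in T$, iff $T^{\mathcal F}=T$. (ii) For any nonempty causal team $T=(T^-,\mathcal G)$ over $\sigma$: $T\models^c\Phi^{\mathcal F}$ iff $\mathcal G\sim\mathcal F$.
   Context: A signature $\sigma=(\mathrm{Dom},\mathrm{Ran})$: $\mathrm{Dom}$ nonempty finite set of variables, each with nonempty finite range $\mathrm{Ran}(X)$; $\mathbf X=\mathbf x$ abbreviates $X_1=x_1\wedge\dots\wedge X_n=x_n$ ($\mathbf x\in\mathrm{Ran}(\mathbf X)=\prod\mathrm{Ran}(X_i)$), inconsistent if it contains $X=x,X=x'$ with $x\neq x'$. $\mathcal{CO}[\sigma]$-formulas: $\alpha::=X=x\mid\neg\alpha\mid\alpha\wedge\alpha\mid\alpha\vee\alpha\mid\mathbf X=\mathbf x\;\Box\!\!\rightarrow\alpha$; $\alpha\supset\beta$ abbreviates $\neg\alpha\vee\beta$. Assignments $s$ on $\mathrm{Dom}$ with $s(X)\in\mathrm{Ran}(X)$. A system of functions $\mathcal F$: for each $V\in\mathrm{En}(\mathcal F)\subseteq\mathrm{Dom}$ a set $PA^{\mathcal F}_V\subseteq\mathrm{Dom}\setminus\{V\}$ and $\mathcal F_V:\mathrm{Ran}(PA^{\mathcal F}_V)\to\mathrm{Ran}(V)$; $\mathrm{Ex}(\mathcal F)=\mathrm{Dom}\setminus\mathrm{En}(\mathcal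 F)$; only recursive systems (acyclic parent graph), forming $\mathbb F_\sigma$. $s$ is compatible with $\mathcal F$ if $s(V)=\mathcal F_V(s(PA^{\mathcal F}_V))$ for $V\in\mathrm{En}(\mathcal F)$; $\mathbb S_\sigma$ = set of compatible pairs $(s,\mathcal F)$. For consistent $\mathbf X=\mathbf x$, $\mathcal F_{\mathbf X=\mathbf x}$ is the restriction to $\mathrm{En}(\mathcal F)\setminus\mathbf X$; $s^{\mathcal F}_{\mathbf X=\mathbf x}$: $X_i\mapsto x_i$, $V\mapsto s(V)$ for $V\in\mathrm{Ex}(\mathcal F)\setminus\mathbf X$, $V\mapsto\mathcal F_V(s^{\mathcal F}_{\mathbf X=\mathbf x}(PA^{\mathcal F}_V))$ for $V\in\mathrm{En}(\mathcal F)\setminus\mathbf X$. Causal team $T=(T^-,\mathcal F)$: $T^-$ a set of assignments compatible with $\mathcal F$; causal subteams $(S^-,\mathcal F)$, $S^-\subseteq T^-$; $T_{\mathbf X=\mathbf x}=(\{s^{\mathcal F}_{\mathbf X=\mathbf x}:s\in T^-\},\mathcal F_{\mathbf X=\mathbf x})$; $\models^c$: $T\models X=x$ iff $s(X)=x$ for all $s\in T^-$; $T\models\neg\alpha$ iff $(\{s\},\mathcal F)\not\models\alpha$ for all $s\in T^-$; $\wedge$ classical; $T\models\alpha\vee\beta$ iff there are causal subteams $T_1,T_2$ with $T_1^-\cup T_2^-=T^-$, $T_1\models\alpha$, $T_2\models\beta$; $T\models\mathbf X=\mathbf x\;\Box\!\!\rightarrow\alpha$ iff $\mathbf X=\mathbf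 x$ inconsistent or $T_{\mathbf X=\mathbf x}\models\alpha$. Generalized causal team: a set $T\subseteq\mathbb S_\sigma$, $T^-=\{s:(s,\mathcal F)\in T\}$, $T_{\mathbf X=\mathbf x}=\{(s^{\mathcal F}_{\mathbf X=\mathbf x},\mathcal F_{\mathbf X=\mathbf x}):(s,\mathcal F)\in T\}$; $\models^g$: same clauses except $T\models\neg\alpha$ iff $\{(s,\mathcal F)\}\not\models\alpha$ for all $(s,\mathcal F)\in T$, and $T\models\alpha\vee\beta$ iff $T=T_1\cup T_2$ with $T_1\models\alpha$, $T_2\models\beta$. $\mathrm{Cn}(\mathcal F)$ = set of $V\in\mathrm{En}(\mathcal F)$ with $\mathcal F_V$ constant. $\mathcal F_V\sim\mathcal G_V$ iff $\mathcal F_V(\mathbf x\mathbf y)=\mathcal G_V(\mathbf x\mathbf z)$ for all $\mathbf x\in\mathrm{Ran}(PA^{\mathcal F}_V\cap PA^{\mathcal G}_V)$, $\mathbf y\in\mathrm{Ran}(PA^{\mathcal F}_V\setminus PA^{\mathcal G}_V)$, $\mathbf z\in\mathrm{Ran}(PA^{\mathcal G}_V\setminus PA^{\mathcal F}_V)$. $\mathcal F\sim\mathcal G$ iff $\mathrm{En}(\mathcal F)\setminus\mathrm{Cn}(\mathcal F)=\mathrm{En}(\mathcal G)\setminus\mathrm{Cn}(\mathcal G)$ and $\mathcal F_V\sim\mathcal G_V$ for each $V$ in this set. $T^{\mathcal F}=\{(s,\mathcal G)\in T:\mathcal G\sim\mathcal F\}$. For $V\in\mathrm{Dom}$ let $\mathbf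 W_V$ list $\mathrm{Dom}\setminus\{V\}$. $\Phi^{\mathcal F}:=\bigwedge_{V\in\mathrm{En}(\mathcal F)\setminus\mathrm{Cn}(\mathcal F)}\eta(V)\wedge\bigwedge_{V\in\mathrm{Dom}\setminus(\mathrm{En}(\mathcal F)\setminus\mathrm{Cn}(\mathcal F))}\xi(V)$, where $\eta(V)$ is the conjunction of all formulas $(\mathbf W=\mathbf w\wedge PA^{\mathcal F}_V=\mathbf p)\;\Box\!\!\rightarrow V=\mathcal F_V(\mathbf p)$ with $\mathbf W$ listing $\mathrm{Dom}\setminus(PA^{\mathcal F}_V\cup\{V\})$, $\mathbf w\in\mathrm{Ran}(\mathbf W)$, $\mathbf p\in\mathrm{Ran}(PA^{\mathcal F}_V)$, and $\xi(V)$ is the conjunction of all formulas $V=v\supset(\mathbf W_V=\mathbf w\;\Box\!\!\rightarrow V=v)$ with $v\in\mathrm{Ran}(V)$, $\mathbf w\in\mathrm{Ran}(\mathbf W_V)$. *)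

From mathcomp Require Import all_boot.
From Stdlib Require List.

Set Implicit Arguments.
Unset Strict Implicit.
Unset Printing Implicit Defensive.

Section CausalTeams.

(* Nonemptiness of Dom and of every Ran X is witnessed by X0 and r0
   (used only in the construction of Phi, as defaults). *)
Variable V : finType.
Variable Ran : V -> finType.

Definition assign := {dffun forall X : V, Ran X}.

(* formulas of CO[sigma]; the antecedent X1=x1 /\ ... /\ Xn=xn of a
   counterfactual is a list of (variable, value) pairs *)
Inductive form : Type :=
| FEq (X : V) (x : Ran X)
| FNeg of form
| FAnd of form & form
| FOr of form & form
| FCf of seq {X : V & Ran X} & form.

Definition FImp (a b : form) : form := FOr (FNeg a) b.

Definition consistent (xs : seq {X : V & Ran X}) : Prop :=
  forall p q, List.In p xs -> List.In q xs -> projT1 p = projT1 q -> p = q.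

Definition inX (xs : seq {X : V & Ran X}) (X : V) : bool :=
  has (fun p => projT1 p == X) xs.

(* A system of functions: sfun X = Some f iff X is endogenous, with
   F_X represented as a function of the whole assignment (required to depend
   only on the parents spa X); spa X = PA_X. *)
Record system := Sys {
  sfun : forall X : V, option (assign -> Ran X);
  spa  : V -> {set V}
}.

Definition En (F : system) : {set V} := [set X | sfun F X].

Definition wf_system (F : system) : Prop :=
  [/\ forall X, X \notin spa F X,
      forall X, sfun F X = None -> spa F X = set0,
      forall X (f : assign -> Ran X), sfun F X = Some f ->
        forall s t : assign, (forall Y, Y \in spa F X -> s Y = t Y) -> f s = f t
    & (* acyclicity of the parent graph (edge Y -> X iff Y in PA_X) *)
      forall X Y, Y \in spa F X -> ~~ connect (fun a b => a \in spa F b) X Y].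

Definition compatible (s : assign) (F : system) : Prop :=
  forall X (f : assign -> Ran X), sfun F X = Some f -> s X = f s.

Definition sys_interv (F : system) (xs : seq {X : V & Ran X}) : system :=
  Sys (fun X => if inX xs X then None else sfun F X)
      (fun X => if inX xs X then set0 else spa F X).

(* s' = s^F_{X=x} (for recursive F and consistent X=x there is exactly one) *)
Definition isol (F : system) (xs : seq {X : V & Ran X}) (s s' : assign) : Prop :=
  (forall p, List.In p xs -> s' (projT1 p) = projT2 p) /\
  (forall X, ~~ inX xs X ->
     match sfun F X with
     | None => s' X = s X
     | Some f => s' X = f s'
     end).

Definition gteam := assign * system -> Prop.

Definition in_S (p : assign * system) : Prop := wf_system p.2 /\ compatible p.1 p.2.

Definition ginterv (xs : seq {X : V & Ran X}) (T : gteam) : gteam :=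
  fun q => exists p, T p /\ q.2 = sys_interv p.2 xs /\ isol p.2 xs p.1 q.1.

Fixpoint gsat (T : gteam) (a : form) : Prop :=
  match a with
  | FEq X x => forall p, T p -> p.1 X = x
  | FNeg b => forall p, T p -> ~ gsat (fun q => q = p) b
  | FAnd b c => gsat T b /\ gsat T c
  | FOr b c => exists T1 T2 : gteam,
      (forall p, T p <-> T1 p \/ T2 p) /\ gsat T1 b /\ gsat T2 c
  | FCf xs b => ~ consistent xs \/ gsat (ginterv xs T) b
  end.

Fixpoint csat (Tm : assign -> Prop) (F : system) (a : form) : Prop :=
  match a with
  | FEq X x => forall s, Tm s -> s X = x
  | FNeg b => forall s, Tm s -> ~ csat (fun t => t = s) F b
  | FAnd b c => csat Tm F b /\ csat Tm F c
  | FOr b c => exists T1 T2 : assign -> Prop,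
      (forall s, Tm s <-> T1 s \/ T2 s) /\ csat T1 F b /\ csat T2 F c
  | FCf xs b => ~ consistent xs \/
      csat (fun s' => exists s, Tm s /\ isol F xs s s') (sys_interv F xs) b
  end.

Definition constb X (f : assign -> Ran X) : bool :=
  [forall s : assign, [forall t : assign, f s == f t]].

Definition noncst (F : system) : {set V} :=
  [set X | match sfun F X with Some f => ~~ constb f | None => false end].

Definition fn_equiv (F G : system) (X : V) : Prop :=
  match sfun F X, sfun G X with
  | Some f, Some g => forall s t : assign,
      (forall Y, Y \in spa F X -> Y \in spa G X -> s Y = t Y) -> f s = g t
  | _, _ => False
  end.

Definition sys_equiv (F G : system) : Prop :=
  noncst F = noncst G /\ forall X, X \in noncst F -> fn_equiv F G X.

Definition gteamF (F : system) (T : gteam) : gteam :=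
  fun p => T p /\ sys_equiv p.2 F.

Fixpoint bigAnd (d : form) (l : seq form) : form :=
  match l with
  | [::] => d
  | [:: a] => a
  | a :: l' => FAnd a (bigAnd d l')
  end.

Variable X0 : V.
Variable r0 : forall X : V, Ran X.

Definition dflt : form := FEq (r0 X0).

(* assignments t with t X fixed to r0 X: they enumerate Ran(Dom \ {X}) once *)
Definition restr_enum (X : V) : seq assign :=
  filter (fun t : assign => t X == r0 X) (enum {: assign}).

Definition eta (F : system) (X : V) (f : assign -> Ran X) : form :=
  bigAnd dflt
    [seq FCf ([seq existT (fun Y : V => Ran Y) Y (t Y)
                 | Y <- enum V & (Y != X) && (Y \notin spa F X)] ++
              [seq existT (fun Y : V => Ran Y) Y (t Y)
                 | Y <- enum V & Y \in spa F X])
             (FEq (f t))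
    | t : assign <- restr_enum X].

Definition xi (X : V) : form :=
  bigAnd dflt
    (flatten [seq [seq FImp (FEq v)
                     (FCf [seq existT (fun Y : V => Ran Y) Y (t Y)
                             | Y <- enum V & Y != X] (FEq v))
                   | t : assign <- restr_enum X]
             | v <- enum (Ran X)]).

Definition Phi (F : system) : form :=
  bigAnd dflt
    [seq match sfun F X with
         | Some f => if constb f then xi X else eta F f
         | None => xi X
         end
    | X <- enum V].

End CausalTeams.

From mathcomp Require Import all_boot.
From Stdlib Require Import FunctionalExtensionality PropExtensionality.

Set Implicit Arguments.
Unset Strict Implicit.
Unset Printing Implicit Defensive.

(** Intervening on all variables but X with values t sends (s, G) to an
    assignment whose X-value is G_X(t) if X is endogenous in G and s(X)
    otherwise.  Each conjunct of Phi^F is a counterfactual of exactly this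
    shape, so Phi^F says that, for every X and every t, this value equals
    F_X(t) when F_X is a non-constant function and s(X) otherwise.  Since the
    mechanisms of G only depend on their parents and s is compatible with G,
    the first case says precisely that G_X is a non-constant function
    equivalent to F_X, and the second that X is exogenous or constant in G.
    A causal team behaves as the generalized team of its pairs (s, G). *)

Lemma In_mem (T : eqType) (x : T) (s : seq T) : List.In x s <-> x \in s.
Proof.
elim: s => [//|y s IH] /=; rewrite in_cons; split.
  by case=> [->|/IH ->]; [rewrite eqxx|rewrite orbT].
by case/orP => [/eqP ->|/IH]; [left|right].
Qed.

Lemma In_flatten_map2 (A B C : Type) (h : A -> B -> C) (xs : seq A) (ys : seq B) c :
  List.In c (flatten [seq [seq h x y | y <- ys] | x <- xs]) <->
  exists x y, [/\ List.In x xs, List.In y ys & c = h x y].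
Proof.
have -> : forall ss : seq (seq C), flatten ss = List.concat ss by elim=> //= s ss ->.
rewrite List.in_concat; split.
  by case=> _ [/List.in_map_iff [x [<- Hx]] /List.in_map_iff [y [<- Hy]]]; exists x, y.
case=> x [y [Hx Hy ->]]; exists (map (h x) ys).
by split; [exact: (List.in_map (fun x => map (h x) ys))|exact: List.in_map].
Qed.

Lemma pred_ext (A : Type) (P Q : A -> Prop) : (forall a, P a <-> Q a) -> P = Q.
Proof.
by move=> PQ; apply: functional_extensionality => a; apply: propositional_extensionality.
Qed.

Section CausalTeamsTheory.

Variables (V : finType) (Ran : V -> finType).

Implicit Types (F G : system Ran) (s t : assign Ran) (xs : seq {X : V & Ran X}).
Implicit Types (T : gteam Ran) (Tm : assign Ran -> Prop).

Definition wf_team T := forall p, T p -> wf_system p.2.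

Definition fixes_all_but xs t (X : V) :=
  (forall p, List.In p xs -> exists2 Y, Y != X & p = existT _ Y (t Y)) /\
  (forall Y, Y != X -> inX xs Y).

Definition interv_value G (X : V) s t : Ran X :=
  if sfun G X is Some g then g t else s X.

Lemma inXP xs Y : inX xs Y -> exists2 p, List.In p xs & projT1 p = Y.
Proof.
elim: xs => [//|p xs IH]; rewrite /inX /=.
case/orP => [/eqP <-|/IH [q Hq <-]]; first by exists p; [left|].
by exists q; [right|].
Qed.

Lemma fixes_all_but_consistent xs t X : fixes_all_but xs t X -> consistent xs.
Proof. by case=> fixed _ p q /fixed [Y _ ->] /fixed [Z _ ->] /= YZ; subst Z. Qed.

Lemma fixes_all_but_notin xs t X : fixes_all_but xs t X -> ~~ inX xs X.
Proof.
case=> fixed _; apply/negP => /inXP [p /fixed [Y YX ->] /= YX'].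
by rewrite YX' eqxx in YX.
Qed.

Lemma fixes_all_but_map (ys : seq V) t X :
  (forall Y, (Y \in ys) = (Y != X)) ->
  fixes_all_but [seq existT _ Y (t Y) | Y <- ys] t X.
Proof.
move=> ysE; split=> [p /List.in_map_iff [Y [<- /In_mem]]|Y YX].
  by rewrite ysE; exists Y.
by rewrite /inX has_map; apply/hasP; exists Y; rewrite ?ysE /=.
Qed.

Lemma sfun_eq_off G X (g : assign Ran -> Ran X) s t :
  wf_system G -> sfun G X = Some g ->
  (forall Y, Y != X -> s Y = t Y) -> g s = g t.
Proof.
case=> noloop _ dep _ GX st; apply: (dep _ _ GX) => Y GY; apply: st.
by apply: contraNneq (noloop X) => YX; rewrite -{1}YX.
Qed.

Lemma isol_interv_value G xs t X s s' :
  wf_system G -> fixes_all_but xs t X -> isol G xs s s' ->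
  s' X = interv_value G X s t.
Proof.
move=> wfG fix_t [set_xs keep]; move: (keep X (fixes_all_but_notin fix_t)).
rewrite /interv_value; case GX: (sfun G X) => [g|] // ->.
apply: (sfun_eq_off wfG GX) => Y /(proj2 fix_t) /inXP [p xs_p <-].
by rewrite set_xs //; case: (proj1 fix_t p xs_p) => Z _ ->.
Qed.

Lemma isol_exists G xs t X s :
  wf_system G -> fixes_all_but xs t X -> exists s', isol G xs s s'.
Proof.
move=> wfG fix_t.
pose s' : assign Ran := [ffun Y => if Y == X then interv_value G Y s t else t Y].
have s'_off Y : Y != X -> s' Y = t Y by move=> YX; rewrite ffunE (negbTE YX).
exists s'; split=> [p /(proj1 fix_t) [Y YX ->] /=|Y]; first exact: s'_off.
have [-> _|YX] := eqVneq Y X; last by rewrite (proj2 fix_t Y YX).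
rewrite ffunE eqxx /interv_value; case GX: (sfun G X) => [g|] //.
by apply: (sfun_eq_off wfG GX) => Z ZX; rewrite s'_off.
Qed.

Lemma gsat_cf_eq T xs t X (v : Ran X) :
  wf_team T -> fixes_all_but xs t X ->
  gsat T (FCf xs (FEq v)) <-> forall p, T p -> interv_value p.2 X p.1 t = v.
Proof.
move=> wfT fix_t /=; split.
  case=> [/(_ (fixes_all_but_consistent fix_t)) //|sat_v p Tp].
  have [s' isol_s'] := isol_exists p.1 (wfT _ Tp) fix_t.
  rewrite -(isol_interv_value (wfT _ Tp) fix_t isol_s').
  by apply: (sat_v (s', sys_interv p.2 xs)); exists p.
move=> val_v; right=> q [p [Tp [_ isol_p]]].
by rewrite (isol_interv_value (wfT _ Tp) fix_t isol_p) val_v.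
Qed.

Lemma gsat_imp_cf_eq T xs t X (v : Ran X) :
  wf_team T -> fixes_all_but xs t X ->
  gsat T (FImp (FEq v) (FCf xs (FEq v))) <->
  forall p, T p -> p.1 X = v -> interv_value p.2 X p.1 t = v.
Proof.
move=> wfT fix_t; split.
  case=> T1 [T2 [T12 [sat_neg sat_cf]]] p Tp pv.
  have wfT2 : wf_team T2 by move=> q T2q; apply: wfT; apply/T12; right.
  case/T12: Tp => [T1p|T2p]; last exact: (proj1 (gsat_cf_eq v wfT2 fix_t) sat_cf).
  by case: (sat_neg p T1p) => q ->.
move=> val_v; exists (fun p => T p /\ p.1 X <> v), (fun p => T p /\ p.1 X = v).
split; last split.
- move=> p; split=> [Tp|[] []//]; have [|/eqP] := eqVneq (p.1 X) v; tauto.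
- by move=> p [_ pv] sat; apply/pv/(sat p).
- by apply/(gsat_cf_eq v _ fix_t) => [p [Tp _]|p [Tp pv]]; [apply: wfT|apply: val_v].
Qed.

Lemma gsat_bigAnd T d (l : seq (form Ran)) :
  (exists a, List.In a l) ->
  gsat T (bigAnd d l) <-> forall a, List.In a l -> gsat T a.
Proof.
case: l => [[? []]|a l _]; elim: l a => [|b l IH] a /=.
  by split=> [sat_a c [<-|[]] //|sat]; apply: sat; left.
rewrite IH; split=> [[sat_a sat_l] c [<-|]|sat] //; first exact: sat_l.
by split=> [|c l_c]; apply: sat; [left|right].
Qed.

Lemma gsat_bigAnd_map (A : Type) T d (h : A -> form Ran) (l : seq A) :
  (exists x, List.In x l) ->
  gsat T (bigAnd d (map h l)) <-> forall x, List.In x l -> gsat T (h x).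
Proof.
case=> x l_x; rewrite gsat_bigAnd; last by exists (h x); apply: List.in_map.
split=> sat; first by move=> y l_y; apply/sat/List.in_map.
by move=> _ /List.in_map_iff [y [<- l_y]]; apply: sat.
Qed.

Variables (X0 : V) (r0 : forall X, Ran X).

Lemma in_restr_enum X t : List.In t (restr_enum r0 X) <-> t X = r0 X.
Proof. by rewrite In_mem mem_filter mem_enum andbT; split=> /eqP. Qed.

Lemma restr_enum_nonempty X : exists t, List.In t (restr_enum r0 X).
Proof. by exists [ffun Y => r0 Y]; rewrite in_restr_enum ffunE. Qed.

Lemma gsat_eta T F X (f : assign Ran -> Ran X) :
  X \notin spa F X -> wf_team T ->
  gsat T (eta X0 r0 F f) <->
  forall p, T p -> forall t, t X = r0 X -> interv_value p.2 X p.1 t = f t.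
Proof.
move=> noloop wfT; rewrite /eta gsat_bigAnd_map; last exact: restr_enum_nonempty.
have fix_t t : fixes_all_but
    ([seq existT _ Y (t Y) | Y <- enum V & (Y != X) && (Y \notin spa F X)] ++
     [seq existT _ Y (t Y) | Y <- enum V & Y \in spa F X]) t X.
  rewrite -map_cat; apply: fixes_all_but_map => Y.
  rewrite mem_cat !(mem_filter _ _ (enum V)) mem_enum !andbT.
  case: (boolP (Y \in spa F X)) => [FY|_]; last by rewrite /= andbT orbF.
  by rewrite orbT; apply/esym; apply: contraNneq noloop => YX; rewrite -{1}YX.
split=> sat.
  by move=> p Tp t tX; apply: (proj1 (gsat_cf_eq _ wfT (fix_t t))) => //; apply/sat/in_restr_enum.
by move=> t /in_restr_enum tX; apply/(gsat_cf_eq _ wfT (fix_t t)) => p Tp; apply: sat.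
Qed.

Lemma gsat_xi T X :
  wf_team T ->
  gsat T (xi X0 r0 X) <->
  forall p, T p -> forall t, t X = r0 X -> interv_value p.2 X p.1 t = p.1 X.
Proof.
move=> wfT; rewrite /xi gsat_bigAnd; last first.
  have [t rt] := restr_enum_nonempty X.
  by eexists; apply/In_flatten_map2; exists (r0 X), t; split; rewrite // In_mem mem_enum.
have fix_t t : fixes_all_but [seq existT _ Y (t Y) | Y <- enum V & Y != X] t X.
  by apply: fixes_all_but_map => Y; rewrite (mem_filter _ _ (enum V)) mem_enum andbT.
split=> sat.
  move=> p Tp t tX; apply: (proj1 (gsat_imp_cf_eq _ wfT (fix_t t))) => //.
  apply/sat/In_flatten_map2; exists (p.1 X), t.
  by split=> //; [apply/In_mem; rewrite mem_enum|apply/in_restr_enum].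
move=> _ /In_flatten_map2 [v [t [_ /in_restr_enum tX ->]]].
by apply/(gsat_imp_cf_eq _ wfT (fix_t t)) => p Tp <-; apply: sat.
Qed.

Definition phi_target F X s t : Ran X :=
  match sfun F X with
  | Some f => if constb f then s X else f t
  | None => s X
  end.

Lemma gsat_Phi T F :
  wf_system F -> wf_team T ->
  gsat T (Phi X0 r0 F) <->
  forall p, T p -> forall X t, t X = r0 X ->
    interv_value p.2 X p.1 t = phi_target F X p.1 t.
Proof.
case=> noloop _ _ _ wfT; rewrite /Phi gsat_bigAnd_map; last first.
  by exists X0; rewrite In_mem mem_enum.
have sat_at X : gsat T (match sfun F X with
                        | Some f => if constb f then xi X0 r0 X else eta X0 r0 F f
                        | None => xi X0 r0 X end) <->
    forall p, T p -> forall t, t X = r0 X -> interv_value p.2 X p.1 t = phi_target F X p.1 t.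
  rewrite /phi_target; case: (sfun F X) => [f|]; last exact: gsat_xi.
  by case: (constb f); [apply: gsat_xi|apply: gsat_eta].
split=> sat; first by move=> p Tp X; apply: (proj1 (sat_at X)) => //; apply/sat/In_mem/mem_enum.
by move=> X _; apply/sat_at => p Tp; apply: sat.
Qed.

Lemma constbP X (g : assign Ran -> Ran X) : reflect (forall a b, g a = g b) (constb g).
Proof.
apply: (iffP forallP) => [const a b|const a]; first exact/eqP/(forallP (const a) b).
by apply/forallP => b; apply/eqP/const.
Qed.

Definition indep_at (A : Type) X (h : assign Ran -> A) :=
  forall t t', (forall Y, Y != X -> t Y = t' Y) -> h t = h t'.

Lemma indep_at_eq (A : Type) X (h1 h2 : assign Ran -> A) :
  indep_at X h1 -> indep_at X h2 ->
  (forall t, t X = r0 X -> h1 t = h2 t) <-> h1 =1 h2.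
Proof.
move=> ind1 ind2; split=> [eq12 t|eq12 t _]; last exact: eq12.
pose t' : assign Ran := [ffun Y => if Y == X then r0 Y else t Y].
have tt' Y : Y != X -> t Y = t' Y by move=> YX; rewrite ffunE (negbTE YX).
by rewrite (ind1 _ _ tt') (ind2 _ _ tt') eq12 // ffunE eqxx.
Qed.

Lemma interv_value_indep G X s : wf_system G -> indep_at X (interv_value G X s).
Proof.
move=> wfG t t' tt'; rewrite /interv_value.
by case GX: (sfun G X) => [g|] //; apply: sfun_eq_off GX _.
Qed.

Lemma phi_target_indep F X s : wf_system F -> indep_at X (phi_target F X s).
Proof.
move=> wfF t t' tt'; rewrite /phi_target; case FX: (sfun F X) => [f|] //.
by case: (constb f) => //; apply: sfun_eq_off FX _.
Qed.

Lemma fn_equiv_eq G F X (g f : assign Ran -> Ran X) :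
  wf_system G -> wf_system F -> sfun G X = Some g -> sfun F X = Some f ->
  fn_equiv G F X <-> g =1 f.
Proof.
case=> _ _ depG _ [_ _ depF _] GX FX; rewrite /fn_equiv GX FX.
split=> [equiv a|gf a b ab]; first exact: equiv.
pose c : assign Ran := [ffun Y => if Y \in spa G X then a Y else b Y].
rewrite (depG _ _ GX a c) => [|Y GY]; last by rewrite ffunE GY.
rewrite gf; apply: (depF _ _ FX) => Y FY; rewrite ffunE.
by case: ifP => // GY; apply: ab.
Qed.

Definition sys_equiv_at G F X :=
  (X \in noncst G) = (X \in noncst F) /\ (X \in noncst G -> fn_equiv G F X).

Lemma sys_equiv_atP G F : sys_equiv G F <-> forall X, sys_equiv_at G F X.
Proof.
split=> [[/setP noncstE equiv] X|equiv]; first by split=> // /equiv.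
by split=> [|X /(equiv X).2//]; apply/setP => X; case: (equiv X).
Qed.

Lemma interv_value_const G X s :
  compatible s G -> interv_value G X s =1 (fun=> s X) <-> X \notin noncst G.
Proof.
move=> compat; rewrite inE /interv_value; case GX: (sfun G X) => [g|] //; rewrite negbK.
split=> [const|/constbP const t]; first by apply/constbP => a b; rewrite !const.
by rewrite (compat X g GX); apply: const.
Qed.

Lemma interv_value_noncst G F X s (f : assign Ran -> Ran X) :
  wf_system G -> wf_system F -> sfun F X = Some f -> ~~ constb f ->
  interv_value G X s =1 f <-> X \in noncst G /\ fn_equiv G F X.
Proof.
move=> wfG wfF FX noncst_f; rewrite inE /interv_value; case GX: (sfun G X) => [g|].
  rewrite (fn_equiv_eq wfG wfF GX FX); split=> [gf|[]//]; split=> //.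
  by apply: contra noncst_f => /constbP const; apply/constbP => a b; rewrite -!gf.
split=> [const|[]//]; case/negP: noncst_f; apply/constbP => a b.
by rewrite -!const.
Qed.

Lemma interv_value_targetP G F X s :
  wf_system G -> wf_system F -> compatible s G ->
  interv_value G X s =1 phi_target F X s <-> sys_equiv_at G F X.
Proof.
move=> wfG wfF compat; have constE := interv_value_const X compat.
rewrite /sys_equiv_at [X \in noncst F]inE /phi_target.
case FX: (sfun F X) => [f|] /=; last first.
  by rewrite constE; split=> [/negbTE nG|[/negbT]]; rewrite ?nG.
case: (boolP (constb f)) => [_|noncst_f] /=.
  by rewrite constE; split=> [/negbTE nG|[/negbT]]; rewrite ?nG.
rewrite (interv_value_noncst _ wfG wfF FX noncst_f).
by split=> [[nG equiv]|[nG equiv]]; split=> //; apply: equiv.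
Qed.

Lemma compatible_PhiP G F s :
  wf_system G -> wf_system F -> compatible s G ->
  (forall X t, t X = r0 X -> interv_value G X s t = phi_target F X s t) <->
  sys_equiv G F.
Proof.
move=> wfG wfF compat; rewrite sys_equiv_atP.
have pointwise X := indep_at_eq (@interv_value_indep G X s wfG) (@phi_target_indep F X s wfF).
split=> equiv X; first by apply/(interv_value_targetP _ wfG wfF compat)/pointwise/equiv.
by apply/pointwise/(interv_value_targetP _ wfG wfF compat).
Qed.

Definition cteam Tm G : gteam Ran := fun p => Tm p.1 /\ p.2 = G.

Lemma cteam1 s G : cteam (fun t => t = s) G = (fun p => p = (s, G)).
Proof. by apply: pred_ext => -[t K]; split=> [[/= -> ->]|[-> ->]]. Qed.

Lemma cteam_section T G : (forall p, T p -> p.2 = G) -> cteam (fun s => T (s, G)) G = T.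
Proof.
move=> onG; apply: pred_ext => -[s K]; split=> [[? /= -> //]|Tp].
by have /= GK := onG _ Tp; subst K.
Qed.

Lemma ginterv_cteam xs Tm G :
  ginterv xs (cteam Tm G) =
  cteam (fun s' => exists s, Tm s /\ isol G xs s s') (sys_interv G xs).
Proof.
apply: pred_ext => -[s' K]; split.
  by case=> -[s _] [[/= Tm_s ->] [/= -> isol_s]]; split=> //; exists s.
by case=> -[s [Tm_s isol_s]] /= ->; exists (s, G).
Qed.

Lemma csat_gsat (a : form Ran) Tm G : csat Tm G a <-> gsat (cteam Tm G) a.
Proof.
elim: a Tm G => [X x|b IH|b IHb c IHc|b IHb c IHc|xs b IH] Tm G /=.
- by split=> [sat p [/sat]|sat s Tm_s]; last exact: (sat (s, G)).
- split=> [sat [s K] [/= Tm_s ->]|sat s Tm_s]; first by rewrite -cteam1 -IH; apply: sat.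
  by rewrite IH cteam1; apply: (sat (s, G)).
- by rewrite IHb IHc.
- split=> -[T1 [T2 [T12 [sat1 sat2]]]].
    exists (cteam T1 G), (cteam T2 G); rewrite -IHb -IHc; split=> // -[s K].
    by rewrite /cteam /= T12; tauto.
  have onG Ti : (forall p, Ti p -> T1 p \/ T2 p) -> forall p, Ti p -> p.2 = G.
    by move=> sub p /sub /T12 [].
  exists (fun s => T1 (s, G)), (fun s => T2 (s, G)).
  rewrite IHb IHc !cteam_section //; try by apply: onG; tauto.
  by split=> // s; rewrite -T12 /cteam /=; tauto.
- by rewrite IH ginterv_cteam.
Qed.

Lemma gteamF_id T F : (forall p, T p -> sys_equiv p.2 F) <-> gteamF F T = T.
Proof.
split=> [equiv|<- p []//]; apply: pred_ext => p.
by split=> [[]//|Tp]; split=> //; apply: equiv.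
Qed.

End CausalTeamsTheory.

Theorem theorem3p4 (V : finType) (Ran : V -> finType)
    (X0 : V) (r0 : forall X : V, Ran X) (* Dom and all Ran(X) nonempty *)
    (F : system Ran) (HF : wf_system F) :
  (* (i) generalized causal teams T ⊆ S_sigma *)
  (forall T : gteam Ran, (forall p, T p -> in_S p) ->
     (gsat T (Phi X0 r0 F) <-> (forall p, T p -> sys_equiv p.2 F)) /\
     ((forall p, T p -> sys_equiv p.2 F) <-> gteamF F T = T)) /\
  (* (ii) nonempty causal teams (T^-, G) *)
  (forall (Tm : assign Ran -> Prop) (G : system Ran),
     wf_system G -> (forall s, Tm s -> compatible s G) -> (exists s, Tm s) ->
     (csat Tm G (Phi X0 r0 F) <-> sys_equiv G F)).
Proof.
split=> [T inS_T|Tm G wfG compat [s0 Tm_s0]].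
  have wfT : wf_team T by move=> p /inS_T [].
  rewrite gsat_Phi // -gteamF_id; split=> //.
  split=> sat p Tp; have [wfp compatp] := inS_T p Tp.
    exact/(compatible_PhiP _ wfp HF compatp)/sat.
  exact/(compatible_PhiP _ wfp HF compatp)/sat.
have wfT : wf_team (cteam Tm G) by move=> p [_ ->].
rewrite csat_gsat gsat_Phi //; split=> [sat|equiv [s K] [/= Tm_s ->]].
  exact/(compatible_PhiP _ wfG HF (compat s0 Tm_s0))/(sat (s0, G)).
exact/(compatible_PhiP _ wfG HF (compat s Tm_s)).
Qed.
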